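(* For every $n\ge2$, the group $\mathcal{AM}(\mathrm{Cr}_n)$ is isomorphic to a semidirect product $(S_n\times S_n)\rtimes\mathbb{Z}_2$.
   Context: $S_n$ is the symmetric group. For $n\ge2$, $\mathrm{Cr}_n$ is the poset $\{x_1,\dots,x_n,y_1,\dots,y_n\}$ whose only relations between distinct elements are $x_i<y_i$ ($1\le i\le n$), $x_{i+1}<y_i$ ($1\le i\le n-1$) and $x_1<y_n$. For a finite connected poset $X$ and $x<y$, $e_{xy}$ denotes the incidence-algebra basis element, and $B=\{e_{xy}:x<y\}$. $\mathcal{C}(X)$ is the set of maximal chains. For a bijection $\theta:B\to B$ and $C:u_1<\dots<u_m$ in $\mathcal{C}(X)$, $\theta$ is increasing on $C$ if there is $D:v_1<\dots<v_m$ in $\mathcal{C}(X)$ with $\theta(e_{u_iu_j})=e_{v_iv_j}$ for all $i<j$, decreasing if $\theta(e_{u_iu_j})=e_{v_{m-j+1}v_{m-i+1}}$ for all $i<j$. $\mathcal{M}(X)$: bijections $B\to B$ increasing or decreasing on every maximal chain. A walk is a sequence $u_0,\dots,u_m$ where for each $i$ one of $u_i,u_{i+1}$ covers the other; closed if $u_0=u_m$. For a closed walk $\Gamma:u_0,\dots,u_m=u_0$ and $z\in X$: $s^+_{\theta,\Gamma}(z)=|\{i: u_i<u_{i+1},\ \exists w>z,\ \theta(e_{zw})=e_{u_iu_{i+1}}\}|$, $s^-_{\theta,\Gamma}(z)=|\{i: u_i>u_{i+1},\ \exists w>z,\ \theta(e_{zw})=e_{u_{i+1}u_i}\}|$, $t^+_{\theta,\Gamma}(z)=|\{i: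 u_i<u_{i+1},\ \exists w<z,\ \theta(e_{wz})=e_{u_iu_{i+1}}\}|$, $t^-_{\theta,\Gamma}(z)=|\{i: u_i>u_{i+1},\ \exists w<z,\ \theta(e_{wz})=e_{u_{i+1}u_i}\}|$, $0\le i\le m-1$. $\theta$ is admissible if $s^+-s^-=t^+-t^-$ at every $z$ for every closed walk; $\mathcal{AM}(X)$ is the set of admissible elements of $\mathcal{M}(X)$, a group under composition. *)

From HB Require Import structures.
From mathcomp Require Import all_boot all_order all_algebra all_fingroup.
Set Implicit Arguments. Unset Strict Implicit. Unset Printing Implicit Defensive.
Import GRing.Theory Num.Theory.

Section PosetDefs.
Variables (T : finType) (lt : rel T).

(* Basis of the incidence algebra: e_xy for x < y, represented by (x,y). *)
Definition incid_basis := {p : T * T | lt p.1 p.2}.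

Definition is_chain (c : seq T) : Prop := sorted lt c.
Definition is_max_chain (c : seq T) : Prop :=
  c <> [::] /\ is_chain c /\
  forall d : seq T, is_chain d -> {subset c <= d} -> {subset d <= c}.

(* theta is increasing on C = u_0 < ... < u_{m-1} (0-indexed) *)
Definition increasing_on (theta : {perm incid_basis}) (c : seq T) : Prop :=
  exists2 d : seq T, is_max_chain d /\ size d = size c &
    forall (i j : nat), i < j -> j < size c ->
      forall b : incid_basis, val b = (nth (val b).1 c i, nth (val b).1 c j) ->
        val (theta b) = (nth (val b).1 d i, nth (val b).1 d j).

(* theta is decreasing on C: theta(e_{u_i u_j}) = e_{v_{m-j+1} v_{m-i+1}} (1-indexed) *)
Definition decreasing_on (theta : {perm incid_basis}) (c : seq T) : Prop :=
  exists2 d : seq T, is_max_chain d /\ size d = size c &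
    forall (i j : nat), i < j -> j < size c ->
      forall b : incid_basis, val b = (nth (val b).1 c i, nth (val b).1 c j) ->
        val (theta b) = (nth (val b).1 d (size c - 1 - j), nth (val b).1 d (size c - 1 - i)).

Definition in_M (theta : {perm incid_basis}) : Prop :=
  forall c, is_max_chain c -> increasing_on theta c \/ decreasing_on theta c.

Definition covers (y x : T) : bool := lt x y && [forall z, ~~ (lt x z && lt z y)].
Definition adj (a b : T) : bool := covers a b || covers b a.

(* A closed walk u_0, ..., u_m = u_0 is encoded by u_0 and p = [:: u_1; ...; u_m]. *)
Definition closed_walk (u0 : T) (p : seq T) : bool := path adj u0 p && (last u0 p == u0).

Definition steps (u0 : T) (p : seq T) : seq (T * T) := zip (u0 :: p) p.

Definition s_plus (theta : {perm incid_basis}) (u0 : T) (p : seq T) (z : T) : nat :=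
  count (fun st : T * T => lt st.1 st.2 &&
           [exists b : incid_basis, ((val b).1 == z) && (val (theta b) == st)]) (steps u0 p).
Definition s_minus (theta : {perm incid_basis}) (u0 : T) (p : seq T) (z : T) : nat :=
  count (fun st : T * T => lt st.2 st.1 &&
           [exists b : incid_basis, ((val b).1 == z) && (val (theta b) == (st.2, st.1))]) (steps u0 p).
Definition t_plus (theta : {perm incid_basis}) (u0 : T) (p : seq T) (z : T) : nat :=
  count (fun st : T * T => lt st.1 st.2 &&
           [exists b : incid_basis, ((val b).2 == z) && (val (theta b) == st)]) (steps u0 p).
Definition t_minus (theta : {perm incid_basis}) (u0 : T) (p : seq T) (z : T) : nat :=
  count (fun st : T * T => lt st.2 st.1 &&
           [exists b : incid_basis, ((val b).2 == z) && (val (theta b) == (st.2, st.1))]) (steps u0 p).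

Definition admissible (theta : {perm incid_basis}) : Prop :=
  forall (u0 : T) (p : seq T), closed_walk u0 p -> forall z : T,
    ((s_plus theta u0 p z)%:Z - (s_minus theta u0 p z)%:Z =
     (t_plus theta u0 p z)%:Z - (t_minus theta u0 p z)%:Z)%R.

Definition in_AM (theta : {perm incid_basis}) : Prop := in_M theta /\ admissible theta.

End PosetDefs.

(* The crown Cr_n: (false, i) = x_{i+1}, (true, j) = y_{j+1} (0-indexed).
   Relations: x_i < y_i and x_{i+1} < y_i (indices mod n), i.e. x_1 < y_n. *)
Notation crown_elt n := (bool * 'I_n)%type.
Definition crown_lt (n : nat) : rel (crown_elt n) :=
  fun a b => match a, b with
             | (false, i), (true, j) => (val i == val j) || (val i == (val j).+1 %% n)
             | _, _ => false
             end.

From mathcomp Require Import all_boot all_order all_algebra all_fingroup all_solvable.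
From mathcomp Require Import zify.
Set Implicit Arguments. Unset Strict Implicit. Unset Printing Implicit Defensive.
Import GRing.Theory Num.Theory.

(* Every maximal chain of Cr_n is a single covering x < y, so every bijection
   of B lies in M(Cr_n).  The net number of upward traversals of each edge by
   a closed walk is a flow obeying Kirchhoff's law at every vertex.  Every
   vertex of the crown has degree two and the 2n edges form one cycle
   alternating between the edges x_i < y_i and x_(i+1) < y_i, so such a flow
   is w on the first kind of edge and -w on the second.  Admissibility of
   theta says that f \o theta obeys Kirchhoff's law for every such flow f;
   testing this on the walk once around the crown (where w = 1) shows that it
   means: theta sends two edges with a common vertex to edges of different
   kinds, i.e. theta preserves or swaps the two kinds.  The kind-preserving
   bijections are pairs of permutations of the n edges of each kind, and the
   swap of the kinds has order 2, whence (S_n x S_n) ><| Z_2. *)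

Lemma sum_pred2 (R : nmodType) (I : finType) (F : I -> R) (P : pred I) a b :
  a != b -> P =1 pred2 a b -> (\sum_(i | P i) F i = F a + F b)%R.
Proof.
move=> neq_ab P_ab; rewrite (eq_bigl _ _ P_ab) (bigD1 a) /= ?eqxx // (big_pred1 b) //.
by move=> i /=; case: (i =P a) => [-> | _]; rewrite ?andbF ?andbT // (negbTE neq_ab).
Qed.

Lemma ordS_invariant_const (k : nat) (T : Type) (f : 'I_k.+1 -> T) :
  (forall i, f (ordS i) = f i) -> forall i, f i = f ord0.
Proof.
move=> f_ordS [i lt_i_k]; elim: i lt_i_k => [|i IH] lt_i_k; first by congr f; apply: val_inj.
have lt_i_k' : i < k.+1 by apply: ltnW.
rewrite -(IH lt_i_k') -(f_ordS (Ordinal lt_i_k')); congr f; apply: val_inj.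
by rewrite /= modn_small.
Qed.

Lemma inord0 k : (inord 0 : 'I_k.+1) = ord0.
Proof. exact: (inord_val (@ord0 k)). Qed.

Lemma inordS (k i : nat) : i < k.+1 -> (inord i.+1 : 'I_k.+1) = ordS (inord i).
Proof.
move=> lt_i_k; apply: val_inj; rewrite /= (inordK lt_i_k).
case: (ltngtP i.+1 k.+1) => [lt_Si_k | gt_Si_k | eq_Si_k].
- by rewrite inordK // modn_small.
- by rewrite ltnS leqNgt lt_i_k in gt_Si_k.
- by rewrite eq_Si_k modnn /inord val_insubd ltnn.
Qed.

Section Flow.
Variables (T : finType) (lt : rel T).
Local Notation E := (incid_basis lt).
Local Open Scope ring_scope.

Definition up_count (u0 : T) (p : seq T) (e : E) : nat :=
  count (fun st => val e == st) (steps u0 p).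
Definition down_count (u0 : T) (p : seq T) (e : E) : nat :=
  count (fun st : T * T => val e == (st.2, st.1)) (steps u0 p).
Definition net_flow (u0 : T) (p : seq T) (e : E) : int :=
  (up_count u0 p e)%:Z - (down_count u0 p e)%:Z.

Definition balanced (f : E -> int) : Prop :=
  forall z, \sum_(e | (val e).1 == z) f e = \sum_(e | (val e).2 == z) f e.

Lemma count_step_images (f : E -> E) (Q : pred E) (g : T * T -> T * T) s :
  injective f ->
  count (fun st => lt (g st).1 (g st).2 && [exists b, Q b && (val (f b) == g st)]) s
  = (\sum_(b | Q b) count (fun st => val (f b) == g st) s)%N.
Proof.
move=> f_inj; elim: s => [|st s IH] /=; first by rewrite big1.
rewrite big_split /= -IH; congr (_ + _)%N.
case: existsP => [[b /andP [Qb /eqP fbE]]|no_b].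
- rewrite -fbE (valP (f b)) (bigD1 b) //= eqxx big1 // => b' /andP [_ nb'].
  by apply/eqP; rewrite eqb0; apply: contra nb' => /eqP /val_inj /f_inj ->.
- rewrite andbF big1 // => b Qb; case: eqP => // fbE; case: no_b; exists b.
  by rewrite Qb fbE eqxx.
Qed.

Lemma sum_count_edges (Q : pred (T * T)) (g : T * T -> T * T) s :
  (\sum_(e : E | Q (val e)) count (fun st => val e == g st) s)%N
  = count (fun st => lt (g st).1 (g st).2 && Q (g st)) s.
Proof.
rewrite -(count_step_images (fun e => Q (val e)) g s (@inj_id E)).
apply: eq_count => st; case lt_g: (lt _ _) => //=.
apply/existsP/idP => [[b /andP [Qb /eqP <-] //] | Qg].
by exists (exist _ (g st) lt_g); rewrite Qg eqxx.
Qed.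

Lemma sum_natz (I : finType) (P : pred I) (F : I -> nat) :
  ((\sum_(i | P i) F i)%N)%:Z = \sum_(i | P i) (F i)%:Z.
Proof. exact: (big_morph Posz PoszD (erefl _)). Qed.

Lemma count_images_sub (theta : {perm E}) (Q : pred E) u0 p :
  (count (fun st => lt st.1 st.2
                    && [exists b, Q b && (val (theta b) == st)]) (steps u0 p))%:Z
  - (count (fun st => lt st.2 st.1
                      && [exists b, Q b && (val (theta b) == (st.2, st.1))]) (steps u0 p))%:Z
  = \sum_(b | Q b) net_flow u0 p (theta b).
Proof.
rewrite (count_step_images _ id _ (@perm_inj _ theta)).
rewrite (count_step_images _ (fun st => (st.2, st.1)) _ (@perm_inj _ theta)).
by rewrite !sum_natz -sumrB.
Qed.

Lemma admissibleE (theta : {perm E}) :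
  admissible theta <->
  forall u0 p, closed_walk lt u0 p -> balanced (net_flow u0 p \o theta).
Proof.
split=> adm u0 p walk z; have := adm u0 p walk z;
  by rewrite /s_plus /s_minus /t_plus /t_minus !count_images_sub.
Qed.

Lemma path_steps_adj (u0 : T) (p : seq T) :
  path (adj lt) u0 p -> all (fun st => adj lt st.1 st.2) (steps u0 p).
Proof. by elim: p u0 => //= x p IH u0 /andP [-> /IH]. Qed.

Lemma closed_walk_perm_ends (u0 : T) (p : seq T) : last u0 p = u0 ->
  perm_eq (map fst (steps u0 p)) (map snd (steps u0 p)).
Proof.
have -> : map fst (steps u0 p) = belast u0 p by elim: p u0 => //= x p IH u0; rewrite IH.
rewrite /steps -/(unzip2 _) unzip2_zip //= => closed.
by rewrite -(perm_cons u0) [u0 :: p]lastI closed perm_sym perm_rcons.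
Qed.

Hypothesis lt_asym : forall x y, lt x y -> lt y x = false.

Lemma count_up_down (P : pred (T * T)) s :
  all (fun st => adj lt st.1 st.2) s ->
  count P s = (count (fun st => lt st.1 st.2 && P st) s
               + count (fun st => lt st.2 st.1 && P st) s)%N.
Proof.
elim: s => //= st s IH /andP [adj_st /IH ->]; rewrite addnACA; congr (_ + _)%N.
move: adj_st; rewrite /adj /covers => /orP [] /andP [lt_st _];
  by rewrite lt_st lt_asym //= ?addn0.
Qed.

Lemma net_flow_balanced u0 p : closed_walk lt u0 p -> balanced (net_flow u0 p).
Proof.
case/andP => walk /eqP closed v; have adj_steps := path_steps_adj walk.
(* A step leaving v climbs an edge starting at v or descends an edge ending at v. *)
have leave_v : count (fun st => st.1 == v) (steps u0 p) =
    (\sum_(e : E | (val e).1 == v) up_count u0 p e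
     + \sum_(e : E | (val e).2 == v) down_count u0 p e)%N.
  by rewrite (count_up_down _ adj_steps) (sum_count_edges (fun x => x.1 == v) id)
    (sum_count_edges (fun x => x.2 == v) (fun st => (st.2, st.1))).
have enter_v : count (fun st => st.2 == v) (steps u0 p) =
    (\sum_(e : E | (val e).2 == v) up_count u0 p e
     + \sum_(e : E | (val e).1 == v) down_count u0 p e)%N.
  by rewrite (count_up_down _ adj_steps) (sum_count_edges (fun x => x.2 == v) id)
    (sum_count_edges (fun x => x.1 == v) (fun st => (st.2, st.1))).
have /seq.permP/(_ (pred1 v)) := closed_walk_perm_ends closed.
rewrite !count_map leave_v enter_v /net_flow !sumrB -!sum_natz => /(congr1 Posz).
by rewrite !PoszD => balance; apply/eqP; rewrite subr_eq addrAC -balance addrK.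
Qed.

End Flow.

Section HeightOne.
Variables (T : finType) (lt : rel T).
Local Notation E := (incid_basis lt).
Hypothesis no_chain3 : forall x y z, lt x y -> lt y z = false.
Hypothesis no_isolated : forall x, exists y, lt x y || lt y x.

Lemma height_one_irr x : lt x x = false.
Proof. by case xx: (lt x x); rewrite // -(no_chain3 x xx). Qed.

Lemma height_one_chain_size c : is_chain lt c -> size c <= 2.
Proof. by case: c => [|x [|y [|z c]]] //= /and3P [/no_chain3 ->]. Qed.

Lemma edge_max_chain x y : lt x y -> is_max_chain lt [:: x; y].
Proof.
move=> xy; split=> //; split=> [|d chain_d sub_d]; first by rewrite /is_chain /= xy.
have uniq_xy : uniq [:: x; y].
  by rewrite /= inE andbT; apply: contraFN (height_one_irr x) => /eqP {2}->.
have [_ eq_d] := uniq_min_size uniq_xy sub_d (height_one_chain_size chain_d).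
by move=> z; rewrite eq_d.
Qed.

Lemma max_chain_edge c : is_max_chain lt c -> exists x y, c = [:: x; y] /\ lt x y.
Proof.
move=> [c_nil [chain_c max_c]]; have size_c := height_one_chain_size chain_c.
case: c c_nil chain_c max_c size_c => [|x [|y [|z c]]] // _.
- move=> _ max_x _.
  have only_x d z : is_chain lt d -> x \in d -> z \in d -> z = x.
    move=> chain_d x_d z_d; apply/eqP; rewrite -mem_seq1.
    by apply: (max_x d chain_d) => // w; rewrite mem_seq1 => /eqP ->.
  have [y /orP [xy | yx]] := no_isolated x.
  + have := only_x [:: x; y] y; rewrite /is_chain /= xy !inE !eqxx orbT.
    by move=> /(_ isT isT isT) eq_yx; rewrite eq_yx height_one_irr in xy.
  + have := only_x [:: y; x] y; rewrite /is_chain /= yx !inE !eqxx orbT.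
    by move=> /(_ isT isT isT) eq_yx; rewrite eq_yx height_one_irr in yx.
- by rewrite /is_chain /= andbT => xy _ _; exists x, y.
Qed.

Lemma height_one_in_M (theta : {perm E}) : in_M theta.
Proof.
move=> c /max_chain_edge [x [y [-> xy]]]; left.
pose e : E := exist _ (x, y) xy.
exists [:: (val (theta e)).1; (val (theta e)).2].
  by split; [exact: edge_max_chain (valP (theta e)) |].
move=> [|[|i]] [|[|j]] //= _ _ b vb.
by rewrite (_ : b = e); [case: (val (theta e)) | exact: val_inj].
Qed.

End HeightOne.

Section SideSwap.
Variables (I X : finType) (code : X -> bool * I) (decode : bool * I -> X).
Hypotheses (codeK : cancel code decode) (decodeK : cancel decode code).
Local Open Scope group_scope.

Definition side (e : X) : bool := (code e).1.
Definition slot (e : X) : I := (code e).2.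

Lemma side_decode t i : side (decode (t, i)) = t.
Proof. by rewrite /side decodeK. Qed.

Lemma slot_decode t i : slot (decode (t, i)) = i.
Proof. by rewrite /slot decodeK. Qed.

Lemma decode_side_slot e : decode (side e, slot e) = e.
Proof. by rewrite -surjective_pairing codeK. Qed.

Definition blockwise_fun (s : {perm I} * {perm I}) (e : X) : X :=
  decode (side e, (if side e then s.1 else s.2) (slot e)).

Lemma blockwise_inj s : injective (blockwise_fun s).
Proof.
move=> e1 e2 /(congr1 code); rewrite !decodeK => -[side_eq slot_eq].
rewrite -(decode_side_slot e1) -(decode_side_slot e2) -side_eq.
by rewrite -side_eq in slot_eq; case: (side e1) slot_eq => /perm_inj ->.
Qed.

Definition blockwise s : {perm X} := perm (@blockwise_inj s).

Lemma blockwiseE s e : blockwise s e = blockwise_fun s e.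
Proof. by rewrite permE. Qed.

Lemma blockwiseM : {in [set: {perm I} * {perm I}] &, {morph blockwise : s t / s * t}}.
Proof.
move=> s t _ _; apply/permP => e.
rewrite permM !blockwiseE /blockwise_fun side_decode slot_decode /=.
by case: (side e); rewrite permM.
Qed.

Canonical blockwise_morphism := Morphism blockwiseM.

Lemma injm_blockwise : 'injm blockwise_morphism.
Proof.
apply/injmP => -[s1 s2] [t1 t2] _ _ /= eq_st.
have slot_eq b i : slot (blockwise (s1, s2) (decode (b, i)))
                 = slot (blockwise (t1, t2) (decode (b, i))) by rewrite eq_st.
congr pair; apply/permP => i; [have := slot_eq true i | have := slot_eq false i];
  by rewrite !blockwiseE /blockwise_fun side_decode !slot_decode.
Qed.

Definition side_fixing := (blockwise_morphism @* [set: {perm I} * {perm I}])%G.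

Lemma side_fixing_isog : side_fixing \isog [set: {perm I} * {perm I}].
Proof. by rewrite isog_sym sub_isog ?injm_blockwise. Qed.

Lemma mem_side_fixing (g : {perm X}) : (g \in side_fixing) = [forall e, side (g e) == side e].
Proof.
apply/idP/forallP => [/morphimP [s _ _ ->] e | side_g].
  by rewrite /= blockwiseE side_decode.
have g_decode b i : g (decode (b, i)) = decode (b, slot (g (decode (b, i)))).
  by rewrite -{1}(decode_side_slot (g _)) (eqP (side_g _)) side_decode.
have slot_inj b : injective (fun i => slot (g (decode (b, i)))).
  move=> i1 i2 slot_eq; apply: (can_inj (@slot_decode b)); apply: (@perm_inj _ g).
  by rewrite g_decode slot_eq -g_decode.
have -> : g = blockwise (perm (slot_inj true), perm (slot_inj false)).
  apply/permP => e; rewrite blockwiseE /blockwise_fun -{1}(decode_side_slot e) g_decode.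
  by case: (side e); rewrite permE.
by rewrite mem_morphim ?inE.
Qed.

Definition side_swap_fun (e : X) : X := decode (~~ side e, slot e).

Lemma side_swap_funK : involutive side_swap_fun.
Proof. by move=> e; rewrite /side_swap_fun side_decode slot_decode negbK decode_side_slot. Qed.

Definition side_swap : {perm X} := perm (inv_inj side_swap_funK).

Lemma side_side_swap e : side (side_swap e) = ~~ side e.
Proof. by rewrite permE side_decode. Qed.

Lemma side_swapK : involutive side_swap.
Proof. by move=> e; rewrite !permE side_swap_funK. Qed.

Lemma side_swap_sqr : side_swap * side_swap = 1.
Proof. by apply/permP => e; rewrite permM side_swapK perm1. Qed.

Lemma side_swapV : side_swap^-1 = side_swap.
Proof. by rewrite -[LHS]mulg1 -side_swap_sqr mulKg. Qed.

Definition side_stab : {set {perm X}} :=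
  [set g : {perm X} | [exists c, [forall e, side (g e) == c (+) side e]]].

Lemma side_stabP (g : {perm X}) :
  reflect (exists c, forall e, side (g e) = c (+) side e) (g \in side_stab).
Proof.
rewrite inE; apply: (iffP existsP) => -[c side_g]; exists c.
  by move=> e; apply/eqP; move/forallP: side_g.
by apply/forallP => e; rewrite side_g.
Qed.

Lemma group_set_side_stab : group_set side_stab.
Proof.
apply/group_setP; split; first by apply/side_stabP; exists false => e; rewrite perm1.
move=> g h /side_stabP [c side_g] /side_stabP [d side_h].
by apply/side_stabP; exists (d (+) c) => e; rewrite permM side_h side_g addbA.
Qed.

Canonical side_stab_group := Group group_set_side_stab.

Variable i0 : I.

Lemma side_swap_notin_fixing : side_swap \notin side_fixing.
Proof.
rewrite mem_side_fixing; apply/forallP => /(_ (decode (true, i0))).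
by rewrite side_side_swap side_decode.
Qed.

Lemma order_side_swap : #[side_swap] = 2.
Proof.
apply: nt_prime_order => //; last first.
  by apply: contraNneq side_swap_notin_fixing => ->; apply: group1.
by rewrite expgS expg1 side_swap_sqr.
Qed.

Lemma side_swap_isog : <[side_swap]> \isog [set: 'Z_2].
Proof. by rewrite isog_sym; have := Zp_isog side_swap; rewrite order_side_swap. Qed.

Lemma side_stab_sdprod : side_fixing ><| <[side_swap]> = side_stab.
Proof.
have swap_in_stab : side_swap \in side_stab.
  by apply/side_stabP; exists true => e; rewrite side_side_swap.
have fixing_in_stab : side_fixing \subset side_stab.
  apply/subsetP => g; rewrite mem_side_fixing => /forallP side_g.
  by apply/side_stabP; exists false => e; rewrite (eqP (side_g e)).
have swap_normalizes : <[side_swap]> \subset 'N(side_fixing).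
  rewrite cycle_subG; apply/normP/setP => g; rewrite mem_conjg !mem_side_fixing.
  rewrite conjgE invgK side_swapV; apply/forallP/forallP => side_g e.
  - have := side_g (side_swap e); rewrite !permM side_swapK.
    by rewrite !side_side_swap; case: (side e); case: (side (g e)).
  - by rewrite !permM side_side_swap (eqP (side_g _)) side_side_swap negbK.
have trivial_meet : side_fixing :&: <[side_swap]> = 1.
  by rewrite setIC prime_TIg ?cycle_subG ?side_swap_notin_fixing // -orderE order_side_swap.
rewrite sdprodE //; apply/eqP; rewrite eqEsubset mul_subG ?cycle_subG //=.
apply/subsetP => g /side_stabP [[] side_g]; last first.
  by rewrite -[g]mulg1 mem_mulg // mem_side_fixing; apply/forallP => e; rewrite side_g.
rewrite -[g](mulgKV side_swap) mem_mulg ?cycle_id // mem_side_fixing side_swapV.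
by apply/forallP => e; rewrite permM side_side_swap side_g negbK.
Qed.

End SideSwap.

Section Crown.
Variable m : nat.
Local Notation n := m.+2.
Local Notation V := (crown_elt n).
Local Notation E := (incid_basis (@crown_lt n)).

Lemma ordS_eqF (i : 'I_n) : (ordS i == i) = false.
Proof.
apply/negbTE/eqP => /(congr1 val) /=; case: i => i /= lt_i_n.
case: (ltngtP i.+1 n) => [lt_Si_n | gt_Si_n | eq_Si_n].
- by rewrite modn_small //; lia.
- by lia.
- by rewrite eq_Si_n modnn; lia.
Qed.

Lemma crown_ltE (k j : 'I_n) :
  crown_lt (false, k) (true, j) = (k == j) || (k == ordS j).
Proof. by []. Qed.

Lemma crown_ltP (a b : V) : crown_lt a b ->
  exists k j, [/\ a = (false, k), b = (true, j) & (k == j) || (k == ordS j)].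
Proof. by case: a b => [[] k] [[] j] //= ab; exists k, j. Qed.

Lemma crown_no_chain3 (a b c : V) : crown_lt a b -> crown_lt b c = false.
Proof. by move=> /crown_ltP [k [j [_ -> _]]]; case: c => [[] i]. Qed.

Lemma crown_lt_asym (a b : V) : crown_lt a b -> crown_lt b a = false.
Proof. by move=> /crown_ltP [k [j [-> -> _]]]. Qed.

Lemma crown_no_isolated (a : V) : exists b, crown_lt a b || crown_lt b a.
Proof. by case: a => [[] k]; [exists (false, k) | exists (true, k)]; rewrite /= eqxx. Qed.

Lemma crown_adjE (a b : V) : adj (@crown_lt n) a b = crown_lt a b || crown_lt b a.
Proof.
have no_between (x y : V) : [forall z, ~~ (crown_lt x z && crown_lt z y)].
  by apply/forallP => z; apply/negP => /andP [/crown_no_chain3 ->].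
by rewrite /adj /covers !no_between !andbT orbC.
Qed.

Lemma crown_edge_subproof (x : bool * 'I_n) :
  crown_lt (false, if x.1 then x.2 else ordS x.2) (true, x.2).
Proof. by rewrite crown_ltE; case: x.1; rewrite eqxx ?orbT. Qed.

(* (true, j) is the edge x_j < y_j and (false, j) the edge x_(j+1) < y_j. *)
Definition crown_decode (x : bool * 'I_n) : E :=
  exist _ ((false, if x.1 then x.2 else ordS x.2), (true, x.2)) (crown_edge_subproof x).

Definition crown_code (e : E) : bool * 'I_n := ((val e).1.2 == (val e).2.2, (val e).2.2).

Lemma crown_decodeK : cancel crown_decode crown_code.
Proof. by case=> [[] j]; rewrite /crown_code /= ?eqxx ?ordS_eqF. Qed.

Lemma crown_codeK : cancel crown_code crown_decode.
Proof.
case=> [[a b] /= ab]; apply: val_inj; rewrite /crown_code /=.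
by have [k [j [-> -> kj]]] := crown_ltP ab; case: eqP kj => [-> | _ /eqP ->].
Qed.

Local Notation side := (side crown_code).
Local Notation up_edge i := (crown_decode (true, i)).
Local Notation slant_edge i := (crown_decode (false, i)).

Lemma src_up_vertex (e : E) i : ((val e).1 == (true, i)) = false.
Proof. by rewrite -[e]crown_codeK; case: (crown_code e). Qed.

Lemma tgt_down_vertex (e : E) i : ((val e).2 == (false, i)) = false.
Proof. by rewrite -[e]crown_codeK; case: (crown_code e). Qed.

Lemma tgt_up_vertex (e : E) i :
  ((val e).2 == (true, i)) = (e == up_edge i) || (e == slant_edge i).
Proof.
rewrite -[e]crown_codeK !(can_eq crown_decodeK); case: (crown_code e) => [t j] /=.
by rewrite !xpair_eqE /=; case: t; rewrite ?orbF.
Qed.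

Lemma src_down_vertex (e : E) k :
  ((val e).1 == (false, k)) = (e == up_edge k) || (e == slant_edge (ord_pred k)).
Proof.
rewrite -[e]crown_codeK !(can_eq crown_decodeK); case: (crown_code e) => [t j] /=.
rewrite !xpair_eqE /=; case: t => /=; rewrite ?orbF //.
by rewrite -(can2_eq (@ordSK n) (@ord_predK n)).
Qed.

Local Open Scope ring_scope.

Lemma crown_balancedP (f : E -> int) :
  balanced f <->
  forall i, f (up_edge i) + f (slant_edge i) = 0
            /\ f (up_edge (ordS i)) + f (slant_edge i) = 0.
Proof.
have up_slant_neq i j : up_edge i != slant_edge j by rewrite (can_eq crown_decodeK).
have sum_src_up i : \sum_(e | (val e).1 == (true, i)) f e = 0.
  by rewrite big_pred0 // => e; rewrite src_up_vertex.
have sum_tgt_down i : \sum_(e | (val e).2 == (false, i)) f e = 0.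
  by rewrite big_pred0 // => e; rewrite tgt_down_vertex.
have sum_tgt_up i : \sum_(e | (val e).2 == (true, i)) f e = f (up_edge i) + f (slant_edge i).
  by apply: sum_pred2 => // e; rewrite tgt_up_vertex.
have sum_src_down k :
    \sum_(e | (val e).1 == (false, k)) f e = f (up_edge k) + f (slant_edge (ord_pred k)).
  by apply: sum_pred2 => // e; rewrite src_down_vertex.
split=> [bal i | bal [[] i]].
- have := bal (true, i); have := bal (false, ordS i).
  by rewrite sum_src_up sum_tgt_up sum_src_down sum_tgt_down ordSK => -> <-.
- by rewrite sum_src_up sum_tgt_up (bal i).1.
- by rewrite sum_src_down sum_tgt_down -{1}(ord_predK i) (bal _).2.
Qed.

Lemma crown_balanced_side (f : E -> int) : balanced f ->
  exists w, forall e, f e = if side e then w else - w.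
Proof.
move/crown_balancedP => bal; exists (f (up_edge ord0)).
have slant_up i : f (slant_edge i) = - f (up_edge i).
  by apply/eqP; rewrite -addr_eq0 addrC (bal i).1.
have up_const : forall i, f (up_edge i) = f (up_edge ord0).
  apply: ordS_invariant_const => i; apply/eqP.
  by rewrite -subr_eq0 -slant_up (bal i).2.
move=> e; case e_code: (crown_code e) => [t j].
rewrite -(crown_codeK e) e_code (side_decode crown_decodeK).
by case: t {e_code}; rewrite ?slant_up up_const.
Qed.

Fixpoint tour_from (i k : nat) : seq V :=
  if k is k'.+1 then (true, inord i) :: (false, inord i.+1) :: tour_from i.+1 k' else [::].

Definition crown_tour : seq V := tour_from 0 n.

Lemma tour_from_path k i : (i + k <= n)%N ->
  path (adj (@crown_lt n)) (false, inord i) (tour_from i k).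
Proof.
elim: k i => [|k IH] i //= le_ik_n.
rewrite !crown_adjE !crown_ltE eqxx -inordS /=; last by lia.
by rewrite eqxx orbT IH //; lia.
Qed.

Lemma tour_from_last k i : last (false, inord i) (tour_from i k) = (false, inord (i + k)).
Proof. by elim: k i => [|k IH] i /=; rewrite ?addn0 // IH addSnnS. Qed.

Lemma crown_tour_closed : closed_walk (@crown_lt n) (false, ord0) crown_tour.
Proof.
rewrite /closed_walk -inord0 tour_from_path // tour_from_last.
by apply/eqP; congr pair; apply: val_inj; rewrite /= add0n /inord !val_insubd ltnn.
Qed.

Lemma tour_from_no_descent k i : (i + k <= n)%N ->
  down_count (false, inord i) (tour_from i k) (up_edge ord0) = 0%N.
Proof.
elim: k i => [|k IH] i //= le_ik_n.
have := IH i.+1; rewrite addSnnS => /(_ le_ik_n).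
rewrite /down_count /= => ->; rewrite addn0 !xpair_eqE /=.
case: (@eqP _ ord0 (inord i)) => [/(congr1 val) /= | _]; last by rewrite andbF.
rewrite inordK; last by lia.
by move=> <-; case: eqP => // /(congr1 val); rewrite /= inordK.
Qed.

Lemma tour_net_flow : net_flow (false, ord0) crown_tour (up_edge ord0) != 0.
Proof.
have := @tour_from_no_descent n 0 (leqnn n); rewrite inord0 /net_flow => ->.
by rewrite subr0 /up_count /crown_tour /= inord0 eqxx.
Qed.

Lemma add_signed_eq0 (w : int) (b c : bool) :
  ((if b then w else - w) + (if c then w else - w) == 0) = (w == 0) || (b != c).
Proof.
case: b; case: c; rewrite ?subrr ?addNr ?eqxx ?orbT ?orbF //.
  by rewrite -mulr2n mulrn_eq0.
by rewrite -opprD oppr_eq0 -mulr2n mulrn_eq0.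
Qed.

Definition separates_adjacent (theta : {perm E}) : Prop :=
  forall i, side (theta (up_edge i)) != side (theta (slant_edge i))
            /\ side (theta (up_edge (ordS i))) != side (theta (slant_edge i)).

Lemma crown_admissibleP (theta : {perm E}) : admissible theta <-> separates_adjacent theta.
Proof.
rewrite admissibleE; split=> [adm i | sep u0 p walk].
- have /crown_balanced_side [w flow_side] := net_flow_balanced crown_lt_asym crown_tour_closed.
  have /crown_balancedP /(_ i) [] := adm _ _ crown_tour_closed.
  rewrite /= !flow_side => /eqP bal_y /eqP bal_x.
  have w_neq0 : w != 0 by move: tour_net_flow; rewrite flow_side (side_decode crown_decodeK).
  by move: bal_y bal_x; rewrite !add_signed_eq0 (negbTE w_neq0).
- have /crown_balanced_side [w flow_side] := net_flow_balanced crown_lt_asym walk.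
  apply/crown_balancedP => i; have [sep_y sep_x] := sep i.
  by rewrite /= !flow_side; split; apply/eqP; rewrite add_signed_eq0 ?sep_y ?sep_x orbT.
Qed.

Lemma separates_adjacentP (theta : {perm E}) :
  separates_adjacent theta <-> theta \in side_stab crown_code.
Proof.
split=> [sep | /side_stabP [c side_theta] i]; last first.
  by rewrite !side_theta !(side_decode crown_decodeK); case: c {side_theta}.
have up_const : forall i, side (theta (up_edge i)) = side (theta (up_edge ord0)).
  apply: ordS_invariant_const => i; have [sep_y sep_x] := sep i.
  by move: sep_y sep_x; do 3!case: (side _).
apply/side_stabP; exists (~~ side (theta (up_edge ord0))) => e.
rewrite -(crown_codeK e); case: (crown_code e) => [[] j]; rewrite (side_decode crown_decodeK).
- by rewrite up_const; case: (side _).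
- by have [sep_y _] := sep j; move: sep_y; rewrite up_const; do 2!case: (side _).
Qed.

Lemma crown_AM_side_stab (theta : {perm E}) : in_AM theta <-> theta \in side_stab crown_code.
Proof.
rewrite -separates_adjacentP -crown_admissibleP; split=> [[] // | adm].
by split=> //; apply: height_one_in_M; [exact: crown_no_chain3 | exact: crown_no_isolated].
Qed.

End Crown.

Theorem proposition4p10 (n : nat) (hn : 2 <= n)
    (G : {set {perm incid_basis (@crown_lt n)}})
    (hG : forall theta, theta \in G <-> in_AM theta) :
  exists (K H : {group {perm incid_basis (@crown_lt n)}}),
    [/\ (K ><| H)%g = G,
        K \isog [set: 'S_n * 'S_n] &
        H \isog [set: 'Z_2]].
Proof.
case: n hn G hG => [|[|m]] // _ G hG.
have -> : G = side_stab (@crown_code m).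
  by apply/setP => theta; apply/idP/idP => [/hG/crown_AM_side_stab | /crown_AM_side_stab/hG].
exists (side_fixing (@crown_codeK m) (@crown_decodeK m)).
exists <[side_swap (@crown_codeK m) (@crown_decodeK m)]>%G; split.
- exact: side_stab_sdprod ord0.
- exact: side_fixing_isog.
- exact: side_swap_isog ord0.
Qed.
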